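(* Let $A\in\mathbb{R}^{m\times n}_+$ with every row containing a positive entry, $(r,c)\in\mathbb{R}^m_{++}\times\mathbb{R}^n_{++}$ with $\langle r,1_m\rangle=\langle c,1_n\rangle$, $y\in\mathbb{R}^n_{++}$, and let $\emptyset\ne T\subsetneq[n]$ have margin $\gamma>0$. Let $h:=h^{A,r,y}_T$. If $\sum_{i\in N(T)}r_i\ge\sum_{j\in T}c_j$, then for any $\delta\in[0,\gamma)$ there is a finite solution $\alpha<\infty$ to the equation $h(\alpha)=h(1)+\delta$.
   Context: $N(T):=\{i\in[m]:\exists j\in T,\ A_{ij}>0\}$. For $y\in\mathbb{R}^n_{++}$ define $c^{A,r}_j(y):=\sum_{i\in[m]}r_i\frac{A_{ij}y_j}{\sum_{k\in[n]}A_{ik}y_k}$ (the column sums after row-normalizing $A\,\mathrm{diag}(y)$ to row sums $r$). The margin of $T$ is the largest $\gamma\ge0$ such that some $\nu\in\mathbb{R}$ satisfies $\max_{j\in T}(c^{A,r}_j(y)-c_j)\le\nu-\gamma\le\nu+\gamma\le\min_{j\notin T}(c^{A,r}_j(y)-c_j)$. The proxy function is $h^{A,r,y}_T(\alpha):=\sum_{j\in T}c^{A,r}_j(y\circ(1_{\bar T}+\alpha1_T))=\sum_{i\in N(T)}r_i\frac{\alpha\mu_i}{1+(\alpha-1)\mu_i}$ with $\mu_i:=\frac{\sum_{j\in T}A_{ij}y_j}{\sum_{j\in[n]}A_{ij}y_j}$, where $\bar T=[n]\setminus T$, $1_T$ is the indicator of $T$, $\circ$ the entrywise product. *)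

From mathcomp Require Import all_boot all_order all_algebra.
From mathcomp Require Import reals.
Set Implicit Arguments. Unset Strict Implicit. Unset Printing Implicit Defensive.
Import Order.TTheory GRing.Theory Num.Theory.
Local Open Scope ring_scope.

Section Defs.
Variables (R : realType) (m n : nat).

Definition Nset (A : 'M[R]_(m, n)) (T : {set 'I_n}) : {set 'I_m} :=
  [set i | [exists j in T, 0 < A i j]].

(* c^{A,r}_j(y) : column sums after row-normalizing A diag(y) to row sums r *)
Definition colsum (A : 'M[R]_(m, n)) (r : 'I_m -> R) (y : 'I_n -> R)
  (j : 'I_n) : R :=
  \sum_(i < m) r i * (A i j * y j / \sum_(k < n) A i k * y k).

Definition margin_feasible (A : 'M[R]_(m, n)) (r : 'I_m -> R) (c y : 'I_n -> R)
  (T : {set 'I_n}) (g : R) : Prop :=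
  0 <= g /\ exists nu : R,
    (forall j, j \in T -> colsum A r y j - c j <= nu - g) /\
    nu - g <= nu + g /\
    (forall j, j \notin T -> nu + g <= colsum A r y j - c j).

Definition is_margin (A : 'M[R]_(m, n)) (r : 'I_m -> R) (c y : 'I_n -> R)
  (T : {set 'I_n}) (g : R) : Prop :=
  margin_feasible A r c y T g /\
  (forall g', margin_feasible A r c y T g' -> g' <= g).

Definition proxy_h (A : 'M[R]_(m, n)) (r : 'I_m -> R) (y : 'I_n -> R)
  (T : {set 'I_n}) (alpha : R) : R :=
  \sum_(j in T)
     colsum A r (fun k => y k * (if k \in T then alpha else 1)) j.

End Defs.

From mathcomp Require Import boolp reals classical_sets topology normedtype realfun.
From mathcomp Require Import all_boot all_order all_algebra.
From mathcomp Require Import ring lra.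
Import Order.TTheory GRing.Theory Num.Theory.
Import numFieldNormedType.Exports.
Set Implicit Arguments.
Unset Strict Implicit.
Local Open Scope ring_scope.

(* Write [F j := colsum A r y j - c j]; since both [colsum] and [c] add up to
   the total mass, [F] sums to zero, and the margin separation then forces
   [\sum_(j in T) F j <= - gamma], i.e. [h 1 + gamma <= \sum_(j in T) c j].
   Rows outside [N(T)] do not see [T], so [h] increases to
   [\sum_(i in N(T)) r i] as [alpha] grows, at rate [O(1/alpha)]; that limit
   exceeds [h 1 + delta] by hypothesis, and the intermediate value theorem
   provides [alpha]. *)

Lemma sum_le_nonpos_bound (R : numDomainType) (I : finType) (S : {set I})
    (F : I -> R) (b : R) :
  S != set0 -> b <= 0 -> (forall j, j \in S -> F j <= b) ->
  \sum_(j in S) F j <= b.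
Proof.
case/set0Pn=> j0 j0S b_le0 F_le; rewrite (bigD1 j0) //= -[leRHS]addr0.
apply: lerD; first exact: F_le.
by apply: sumr_le0 => j /andP[jS _]; apply: le_trans b_le0; exact: F_le.
Qed.

Lemma sum_le_margin (R : realDomainType) (I : finType) (T : {set I})
    (F : I -> R) (nu g : R) :
  T != set0 -> T != [set: I] -> 0 <= g -> \sum_i F i = 0 ->
  (forall j, j \in T -> F j <= nu - g) ->
  (forall j, j \notin T -> nu + g <= F j) ->
  \sum_(j in T) F j <= - g.
Proof.
move=> T_n0 T_nT g_ge0 F_sum0 F_T F_Tc.
have [nu_le0 | nu_gt0] := lerP nu 0.
  have := sum_le_nonpos_bound T_n0 (_ : nu - g <= 0) F_T; lra.
have Tc_n0 : ~: T != set0 by rewrite -setCT (inj_eq (can_inj (@setCK _))).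
have Tc_le : forall j, j \in ~: T -> - F j <= - (nu + g).
  by move=> j; rewrite inE lerN2; exact: F_Tc.
have := sum_le_nonpos_bound Tc_n0 (_ : - (nu + g) <= 0) Tc_le; rewrite sumrN.
move: F_sum0; rewrite (bigID (mem T)) /=.
under [\sum_(i | i \notin T) _]eq_bigl do rewrite -in_setC.
lra.
Qed.

Lemma ratio_lower_bound (R : realFieldType) (S U a : R) :
  0 < S -> 0 <= U -> 0 < a -> 1 - U / (a * S) <= a * S / (a * S + U).
Proof.
move=> S_gt0 U_ge0 a_gt0; have aS_gt0 : 0 < a * S by rewrite mulr_gt0.
have den_gt0 : 0 < a * S + U by rewrite ltr_pwDl.
have -> : a * S / (a * S + U) = 1 - U / (a * S + U).
  by field; rewrite gt_eqF.
rewrite lerD2l lerN2 ler_wpM2l // lef_pV2 ?posrE //.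
by rewrite lerDl.
Qed.

Lemma ratio_continuous (R : realType) (S U a : R) : a * S + U != 0 ->
  {for a, continuous (fun b : R => b * S / (b * S + U))}.
Proof.
move=> den_n0.
have lin_cont : {for a, continuous (fun b : R => b * S)}.
  by apply: continuousM; [exact: cvg_id | exact: cvg_cst].
apply: continuousM => //; apply: continuousV => //.
by apply: cvgD => //; exact: cvg_cst.
Qed.

Lemma sum_continuous (R : realType) (I : finType) (P : pred I)
    (F : I -> R -> R) (a : R) :
  (forall i, P i -> {for a, continuous (F i)}) ->
  {for a, continuous (fun b => \sum_(i | P i) F i b)}.
Proof. by move=> F_cont; apply: cvg_big => //; exact: add_continuous. Qed.

Section Proxy.
Variables (R : realType) (m n : nat) (A : 'M[R]_(m, n)) (r : 'I_m -> R).
Variables (y : 'I_n -> R) (T : {set 'I_n}).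

Definition massT (i : 'I_m) : R := \sum_(k in T) A i k * y k.
Definition massTc (i : 'I_m) : R := \sum_(k | k \notin T) A i k * y k.

Lemma proxy_hE a : proxy_h A r y T a =
  \sum_i r i * (a * massT i / (a * massT i + massTc i)).
Proof.
rewrite /proxy_h /colsum exchange_big /=; apply: eq_bigr => i _.
have -> : \sum_k A i k * (y k * (if k \in T then a else 1)) =
          a * massT i + massTc i.
  rewrite (bigID (mem T)) /= /massT /massTc mulr_sumr; congr (_ + _).
    by apply: eq_bigr => k ->; ring.
  by apply: eq_bigr => k /negbTE ->; rewrite mulr1.
rewrite -mulr_sumr -mulr_suml /massT mulr_sumr; congr (_ * (_ / _)).
by apply: eq_bigr => j ->; ring.
Qed.

Lemma proxy_h1 : proxy_h A r y T 1 = \sum_(j in T) colsum A r y j.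
Proof.
rewrite /proxy_h; have -> // : (fun k => y k * (if k \in T then 1 else 1)) = y.
by apply/funext => k; rewrite if_same mulr1.
Qed.

Hypothesis A_ge0 : forall i j, 0 <= A i j.
Hypothesis y_gt0 : forall j, 0 < y j.
Hypothesis row_pos : forall i, exists j, 0 < A i j.

Lemma row_mass_gt0 i : 0 < \sum_k A i k * y k.
Proof.
have [j Aij_gt0] := row_pos i; rewrite (bigD1 j) //= ltr_pwDl ?mulr_gt0 //.
by apply: sumr_ge0 => k _; rewrite mulr_ge0 // ltW.
Qed.

Lemma sum_colsum : \sum_j colsum A r y j = \sum_i r i.
Proof.
rewrite /colsum exchange_big /=; apply: eq_bigr => i _.
by rewrite -mulr_sumr -mulr_suml divff ?mulr1 // gt_eqF // row_mass_gt0.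
Qed.

Lemma massTc_ge0 i : 0 <= massTc i.
Proof. by apply: sumr_ge0 => k _; rewrite mulr_ge0 // ltW. Qed.

Lemma massT_gt0 i : i \in Nset A T -> 0 < massT i.
Proof.
rewrite inE => /existsP[j /andP[jT Aij_gt0]].
rewrite /massT (bigD1 j) //= ltr_pwDl ?mulr_gt0 //.
by apply: sumr_ge0 => k _; rewrite mulr_ge0 // ltW.
Qed.

Lemma massT_eq0 i : i \notin Nset A T -> massT i = 0.
Proof.
rewrite inE => /existsPn A_T0; apply: big1 => k kT.
have := A_T0 k; rewrite kT /= -leNgt => Aik_le0.
by rewrite (@le_anti _ _ (A i k) 0) ?Aik_le0 ?A_ge0 ?mul0r.
Qed.

Lemma mass_scaled_gt0 a i : 0 < a -> 0 < a * massT i + massTc i.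
Proof.
move=> a_gt0; have [iN | iNN] := boolP (i \in Nset A T).
  by rewrite ltr_pwDl ?mulr_gt0 ?massT_gt0 ?massTc_ge0.
have := row_mass_gt0 i.
by rewrite (bigID (mem T)) /= -/(massT i) -/(massTc i) massT_eq0 // mulr0.
Qed.

Lemma proxy_h_continuous a : 0 < a -> {for a, continuous (proxy_h A r y T)}.
Proof.
move=> a_gt0; rewrite (_ : proxy_h A r y T = fun b => \sum_i r i *
    (b * massT i / (b * massT i + massTc i))); last exact/funext/proxy_hE.
apply: sum_continuous => i _; apply: continuousM; first exact: cvg_cst.
by apply: ratio_continuous; rewrite gt_eqF ?mass_scaled_gt0.
Qed.

Hypothesis r_ge0 : forall i, 0 <= r i.

Let massN := \sum_(i in Nset A T) r i.
Let slack := \sum_(i in Nset A T) r i * massTc i / massT i.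

Lemma proxy_h_lower_bound a : 0 < a -> massN - slack / a <= proxy_h A r y T a.
Proof.
move=> a_gt0; rewrite proxy_hE (bigID (mem (Nset A T))) /=.
rewrite [X in _ <= _ + X]big1 ?addr0 => [|i /massT_eq0 ->]; last first.
  by rewrite mulr0 mul0r mulr0.
rewrite /massN /slack mulr_suml -sumrB; apply: ler_sum => i iN.
have mT_gt0 := massT_gt0 iN.
have -> : r i - r i * massTc i / massT i / a = r i * (1 - massTc i / (a * massT i)).
  by field; rewrite !gt_eqF.
by rewrite ler_wpM2l ?ratio_lower_bound ?massTc_ge0.
Qed.

Lemma proxy_h_attains v : proxy_h A r y T 1 <= v -> v < massN ->
  exists2 a, 1 <= a & proxy_h A r y T a = v.
Proof.
move=> h1_le v_lt; set eps := massN - v.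
have eps_gt0 : 0 < eps by rewrite subr_gt0.
have slack_ge0 : 0 <= slack.
  apply: sumr_ge0 => i iN.
  by rewrite divr_ge0 ?mulr_ge0 ?massTc_ge0 ?r_ge0 // ltW ?massT_gt0.
set b := 1 + slack / eps.
have b_ge1 : 1 <= b by rewrite lerDl divr_ge0 // ltW.
have b_gt0 : 0 < b by lra.
have slack_b : slack / b <= eps.
  rewrite ler_pdivrMr // mulrDr mulr1 [eps * _]mulrC divfK ?lt0r_neq0 //; lra.
have hb_ge : v <= proxy_h A r y T b.
  by apply: le_trans (proxy_h_lower_bound b_gt0); rewrite /eps in slack_b; lra.
have h_cont : {within `[1, b], continuous (proxy_h A r y T)}%classic.
  apply: continuous_in_subspaceT => x /set_mem /=.
  by rewrite in_itv /= => /andP[x_ge1 _]; apply: proxy_h_continuous; lra.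
have [|a] := IVT (v := v) b_ge1 h_cont; first by rewrite ge_min le_max h1_le hb_ge orbT.
by rewrite in_itv /= => /andP[a_ge1 _] ha; exists a.
Qed.

End Proxy.

Theorem proposition6p9 (R : realType) (m n : nat) (A : 'M[R]_(m, n))
  (r : 'I_m -> R) (c y : 'I_n -> R) (T : {set 'I_n}) (gamma : R) :
  (forall i j, 0 <= A i j) ->
  (forall i, exists j, 0 < A i j) ->
  (forall i, 0 < r i) ->
  (forall j, 0 < c j) ->
  \sum_(i < m) r i = \sum_(j < n) c j ->
  (forall j, 0 < y j) ->
  T != set0 -> T != [set: 'I_n] ->
  is_margin A r c y T gamma -> 0 < gamma ->
  \sum_(i in Nset A T) r i >= \sum_(j in T) c j ->
  forall delta : R, 0 <= delta -> delta < gamma ->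
  exists alpha : R, 0 < alpha /\
    proxy_h A r y T alpha = proxy_h A r y T 1 + delta.
Proof.
move=> A_ge0 row_pos r_gt0 _ r_sum_c y_gt0 T_n0 T_nT [[g_ge0 [nu [F_T [_ F_Tc]]]] _]
  _ N_ge delta delta_ge0 delta_lt.
have F_sum0 : \sum_j (colsum A r y j - c j) = 0.
  by rewrite sumrB sum_colsum // r_sum_c subrr.
have := sum_le_margin T_n0 T_nT g_ge0 F_sum0 F_T F_Tc.
rewrite sumrB -proxy_h1 => h1_gamma.
have r_ge0 i : 0 <= r i by exact: ltW.
have h1_le : proxy_h A r y T 1 <= proxy_h A r y T 1 + delta by rewrite lerDl.
have v_lt : proxy_h A r y T 1 + delta < \sum_(i in Nset A T) r i.
  apply: lt_le_trans N_ge; lra.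
have [a a_ge1 ha] := proxy_h_attains A_ge0 y_gt0 row_pos r_ge0 h1_le v_lt.
by exists a; split; [lra | rewrite ha].
Qed.
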